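(* Let $q=q_n$ be the transpose top with random measure on $S_n$, $u=u_n$ the uniform measure on $S_n$, and $h_t=h_{q,t}$ the associated continuous time law. For any sequence of nonnegative reals $(k_n)$ such that $(k_n-n\log n)/n\to-\infty$ as $n\to\infty$, we have $d_2(h_{k_n},u)\to\infty$ and $\|h_{k_n}-u\|_{TV}\to 1$.
   Context: The transpose top with random measure on $S_n$ is $q(\tau)=1/n$ if $\tau=(1,j)$, $1\le j\le n$ (with $(1,1)=e$), and $0$ otherwise. $q^{(k)}$ is the $k$-fold convolution power and $h_{q,t}=e^{-t}\sum_{k\ge0}\frac{t^k}{k!}q^{(k)}$. $d_2(p,u)=\big(|G|\sum_{x\in G}|p(x)-u(x)|^2\big)^{1/2}$ and $\|p-u\|_{TV}=\sup_{A\subset G}(p(A)-u(A))$. *)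

From mathcomp Require Import all_boot all_fingroup.
From Stdlib Require Import Reals ClassicalEpsilon.
Set Implicit Arguments. Unset Strict Implicit. Unset Printing Implicit Defensive.

Local Open Scope R_scope.

(* S_n acting on {0,...,n-1}; position 0 plays the role of "1" *)
Notation Sn n := {perm 'I_n}.

Definition rsum (T : finType) (f : T -> R) : R := \big[Rplus/R0]_(x : T) f x.

(* transpose top with random: q(tau) = 1/n if tau = (1 j), (1 1) = e, else 0 *)
Definition q_ttr (n : nat) (x : Sn n) : R :=
  if [exists i : 'I_n, exists j : 'I_n, (nat_of_ord i == 0%nat) && (x == tperm i j)]
  then / INR n else 0.

Definition unif (n : nat) (x : Sn n) : R := / INR (#|[set: Sn n]|).

Definition conv (n : nat) (p r : Sn n -> R) (x : Sn n) : R :=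
  rsum (fun y : Sn n => p y * r (y^-1 * x)%g).

Definition delta1 (n : nat) (x : Sn n) : R := if x == 1%g then 1 else 0.

Fixpoint convpow (n : nat) (p : Sn n -> R) (k : nat) : Sn n -> R :=
  match k with
  | O => @delta1 n
  | S k' => conv (convpow p k') p
  end.

Definition heat (n : nat) (p : Sn n -> R) (t : R) (x : Sn n) : R :=
  epsilon (inhabits 0) (fun l => infinite_sum
     (fun k => exp (- t) * (t ^ k / INR (Factorial.fact k)) * convpow p k x) l).

Definition dist2 (T : finType) (p u : T -> R) : R :=
  sqrt (INR #|[set: T]| * rsum (fun x => Rsqr (Rabs (p x - u x)))).

(* total variation: sup over subsets A of (p(A) - u(A)); G finite, so a max over all A *)
Definition msr (T : finType) (p : T -> R) (A : {set T}) : R :=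
  rsum (fun x => if x \in A then p x else 0).

Definition tv (T : finType) (p u : T -> R) : R :=
  foldr Rmax (msr p set0 - msr u set0)
    (map (fun A : {set T} => msr p A - msr u A) (enum [set: {set T}])).

(* Positions are 'I_n.+1 and position 0 plays the role of the card "1".  Let F(s) count
   the fixed points i <> 0 of s.  A step of the walk multiplies on the right by a uniformly
   chosen transposition (0 j); if S is the set of positions j drawn so far, then every
   position outside S and different from 0 is still fixed, so the number N(S) of such
   "untouched" positions is a lower bound for F.  The first two moments of N after k steps
   are explicit geometric expressions; mixing over a Poisson(t) number of steps, N has mean
   mu = n e^{-t/(n+1)} and variance at most mu, so Chebyshev's inequality gives
   h_t(F >= mu/2) >= 1 - 4/mu.  Under the uniform law E[F] <= 1, so Markov's inequality
   gives u(F >= mu/2) <= 2/mu.  The test set A = {F >= mu/2} therefore yields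
   ||h_t - u||_TV >= 1 - 6/mu and d_2(h_t,u)^2 >= (h_t(A) - u(A))^2 / u(A) >= mu/8, and the
   hypothesis on k_n says precisely that mu -> oo along t = k_n. *)
From HB Require Import structures.
From mathcomp Require Import all_boot all_fingroup.
From Stdlib Require Import Reals Lra Psatz ClassicalEpsilon.
Set Implicit Arguments. Unset Strict Implicit.
Local Open Scope R_scope.

(* Keep INR n.+1 folded under simplification, so that field and lra treat it as one atom. *)
Arguments INR : simpl never.

(* Real addition is a commutative monoid law; this makes the bigop library apply to rsum. *)
HB.instance Definition _ := Monoid.isComLaw.Build R R0 Rplus
  (fun x y z => esym (Rplus_assoc x y z)) Rplus_comm Rplus_0_l.

Section FiniteSums.
Variable T : finType.
Implicit Types (f g : T -> R) (c : R).

Lemma rsum_ext f g : (forall x, f x = g x) -> rsum f = rsum g.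
Proof. by move=> H; apply: eq_bigr => x _; exact: H. Qed.

Lemma rsum_add f g : rsum (fun x => f x + g x) = rsum f + rsum g.
Proof. exact: big_split. Qed.

Lemma rsum_scal c f : rsum (fun x => c * f x) = c * rsum f.
Proof.
apply: (big_rec2 (fun a b => a = c * b)); first by rewrite Rmult_0_r.
by move=> x a b _ ->; rewrite Rmult_plus_distr_l.
Qed.

Lemma rsum_sub f g : rsum (fun x => f x - g x) = rsum f - rsum g.
Proof.
rewrite (rsum_ext (g := fun x => f x + (-1) * g x)); last by move=> x; ring.
rewrite rsum_add rsum_scal; ring.
Qed.

Lemma rsum_le f g : (forall x, f x <= g x) -> rsum f <= rsum g.
Proof.
move=> H; apply: (big_rec2 (fun a b => a <= b)); first lra.
by move=> x a b _ hab; have := H x; lra.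
Qed.

Lemma rsum_const c : rsum (fun _ : T => c) = INR #|T| * c.
Proof.
rewrite /rsum big_const; elim: #|T| => [|m IH] /=; first by rewrite Rmult_0_l.
by rewrite IH S_INR; ring.
Qed.

Lemma rsum_nonneg f : (forall x, 0 <= f x) -> 0 <= rsum f.
Proof. by move=> H; have := rsum_le H; rewrite rsum_const Rmult_0_r. Qed.

Lemma rsum_pred1 (j : T) c : rsum (fun i => if i == j then c else 0) = c.
Proof. by rewrite /rsum (bigD1 j) //= eqxx big1 ?Rplus_0_r // => i /negbTE ->. Qed.

Lemma rsum_ge_term f (x : T) : (forall y, 0 <= f y) -> f x <= rsum f.
Proof.
move=> H; rewrite -(rsum_pred1 x (f x)); apply: rsum_le => y.
by case: eqP => [->|_]; [lra | exact: H].
Qed.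

Lemma rsum_reindex (h : T -> T) f : bijective h -> rsum (fun x => f (h x)) = rsum f.
Proof. by move=> hb; symmetry; apply: (reindex h (onW_bij _ hb)). Qed.

End FiniteSums.

Lemma rsum_swap (T U : finType) (f : T -> U -> R) :
  rsum (fun x => rsum (fun y => f x y)) = rsum (fun y => rsum (fun x => f x y)).
Proof. exact: exchange_big. Qed.

Lemma card_pos (T : finType) (x : T) : 0 < INR #|[set: T]|.
Proof. by apply: lt_0_INR; apply/ltP/card_gt0P; exists x; rewrite inE. Qed.

Lemma INR_succ_pos (n : nat) : 0 < INR n.+1.
Proof. apply: lt_0_INR; lia. Qed.

Definition indic (T : finType) (A : {set T}) (x : T) : R := if x \in A then 1 else 0.

Section Series.
Implicit Types (f g : nat -> R).

Lemma cv_const c : Un_cv (fun _ => c) c.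
Proof. by move=> eps he; exists 0%nat => m _; rewrite /R_dist Rminus_diag Rabs_R0. Qed.

Lemma series_ext f g l : (forall k, f k = g k) -> infinite_sum f l -> infinite_sum g l.
Proof. by move=> H; apply: Un_cv_ext => N; apply: sum_eq => i _; exact: H. Qed.

Lemma series_scal f l c : infinite_sum f l -> infinite_sum (fun k => c * f k) (c * l).
Proof.
move=> h; apply: (Un_cv_ext (fun N => c * sum_f_R0 f N)).
  by move=> N; rewrite scal_sum; apply: sum_eq => i _; ring.
exact: CV_mult (cv_const c) h.
Qed.

Lemma series_add f g l1 l2 : infinite_sum f l1 -> infinite_sum g l2 ->
  infinite_sum (fun k => f k + g k) (l1 + l2).
Proof.
move=> h1 h2; apply: (Un_cv_ext (fun N => sum_f_R0 f N + sum_f_R0 g N)).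
  by move=> N; rewrite sum_plus.
exact: CV_plus.
Qed.

Lemma series_le f g l1 l2 : (forall k, f k <= g k) ->
  infinite_sum f l1 -> infinite_sum g l2 -> l1 <= l2.
Proof. by move=> H; apply: Rle_cv_lim => N; apply: sum_Rle => i _; exact: H. Qed.

Lemma series_zero : infinite_sum (fun _ => 0) 0.
Proof.
move=> eps he; exists 0%nat => m _.
have -> : sum_f_R0 (fun _ => 0) m = 0 by elim: m => [|m IH] //=; rewrite IH; ring.
by rewrite /R_dist Rminus_diag Rabs_R0.
Qed.

Lemma series_rsum (T : finType) (F : T -> nat -> R) (L : T -> R) :
  (forall x, infinite_sum (F x) (L x)) ->
  infinite_sum (fun k => rsum (fun x => F x k)) (rsum L).
Proof.
move=> H; apply: (Un_cv_ext (fun N => rsum (fun x => sum_f_R0 (F x) N))).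
  elim=> [|N IH] /=; first by apply: rsum_ext.
  by rewrite -IH rsum_add.
rewrite /rsum; elim: (index_enum T) => [|a r IH].
  by apply: (Un_cv_ext (fun _ => 0)) => [N|]; rewrite ?big_nil //; exact: cv_const.
rewrite big_cons; apply: (Un_cv_ext (fun N => sum_f_R0 (F a) N + \big[Rplus/R0]_(x <- r) sum_f_R0 (F x) N)).
  by move=> N; rewrite big_cons.
exact: CV_plus (H a) IH.
Qed.

End Series.

(* Poisson(t) weights and their generating function E[a^K] = e^{-t} e^{t a}. *)
Definition pois (t : R) (k : nat) : R := exp (- t) * (t ^ k / INR (Factorial.fact k)).

Definition poisson_pgf (t a : R) : R := exp (- t) * exp (t * a).

Lemma pois_nonneg t k : 0 <= t -> 0 <= pois t k.
Proof.
move=> ht; apply: Rmult_le_pos; first exact: Rlt_le (exp_pos _).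
apply: Rmult_le_pos; first exact: pow_le.
by apply/Rlt_le/Rinv_0_lt_compat/lt_0_INR/Factorial.lt_O_fact.
Qed.

Lemma pois_series t a : infinite_sum (fun k => pois t k * a ^ k) (poisson_pgf t a).
Proof.
have h : exp_in (t * a) (exp (t * a)) by rewrite /exp; case: (exist_exp (t * a)).
apply: (series_ext (f := fun k => exp (- t) * (/ INR (Factorial.fact k) * (t * a) ^ k))).
  by move=> k; rewrite /pois Rpow_mult_distr /Rdiv; ring.
exact: series_scal.
Qed.

Lemma poisson_pgf1 t : poisson_pgf t 1 = 1.
Proof. by rewrite /poisson_pgf -exp_plus Rmult_1_r Rplus_opp_l exp_0. Qed.

Lemma poisson_pgf_pos t a : 0 < poisson_pgf t a.
Proof. by apply: Rmult_lt_0_compat; apply: exp_pos. Qed.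

Lemma poisson_pgfM t a b : poisson_pgf t a * poisson_pgf t b = poisson_pgf t (a + b - 1).
Proof. by rewrite /poisson_pgf -!exp_plus; congr exp; ring. Qed.

Section Walk.
Variable n : nat.
Local Notation G := (Sn n.+1).
Local Notation q := (@q_ttr n.+1).

(* The transposition (0 j); tau 0 is the identity. *)
Definition tau (j : 'I_n.+1) : G := tperm ord0 j.

Lemma tau_inj : injective tau.
Proof. by move=> i j /(congr1 (fun s : G => s ord0)); rewrite /tau !tpermL. Qed.

Lemma q_ttrE (z : G) :
  q z = if z \in [set tau j | j in [set: 'I_n.+1]] then / INR n.+1 else 0.
Proof.
rewrite /q_ttr; congr (if _ then _ else _).
apply/existsP/imsetP => [[i /existsP [j /andP [/eqP hi /eqP ->]]]|[j _ ->]].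
  by exists j => //; rewrite /tau; congr tperm; exact: val_inj.
by exists ord0; apply/existsP; exists j; rewrite /= eqxx.
Qed.

Lemma q_nonneg (x : G) : 0 <= q x.
Proof.
rewrite q_ttrE; case: ifP => _; last lra.
by apply/Rlt_le/Rinv_0_lt_compat/INR_succ_pos.
Qed.

Lemma q_expect (h : G -> R) :
  rsum (fun z => q z * h z) = / INR n.+1 * rsum (fun j => h (tau j)).
Proof.
rewrite -rsum_scal.
have -> : rsum (fun j => / INR n.+1 * h (tau j)) =
   \big[Rplus/R0]_(z in [set tau j | j in [set: 'I_n.+1]]) (/ INR n.+1 * h z).
  rewrite big_imset; last by move=> x y _ _; apply: tau_inj.
  by apply: eq_bigl => j; rewrite inE.
rewrite big_mkcond; apply: eq_bigr => z _; rewrite q_ttrE.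
by case: ifP => _; rewrite ?Rmult_0_l.
Qed.

Lemma conv_q_expect (p g : G -> R) :
  rsum (fun x => conv p q x * g x) =
  rsum (fun y => p y * (/ INR n.+1 * rsum (fun j => g (y * tau j)%g))).
Proof.
rewrite (rsum_ext (g := fun x => rsum (fun y => p y * (q (y^-1 * x)%g * g x)))); last first.
  move=> x; rewrite /conv Rmult_comm -rsum_scal; apply: rsum_ext => y; ring.
rewrite rsum_swap; apply: rsum_ext => y; rewrite rsum_scal.
rewrite -(q_expect (fun z => g (y * z)%g)); congr (_ * _).
rewrite -(@rsum_reindex _ (fun z => y * z)%g); last first.
  by exists (fun z => y^-1 * z)%g => z; rewrite ?mulKg ?mulKVg.
by apply: rsum_ext => z; rewrite mulKg.
Qed.

Definition expect (k : nat) (g : G -> R) : R := rsum (fun x => convpow q k x * g x).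

(* Functions of the current position s and of the set S of positions j drawn so far.
   path_avg k g s S averages g over all k-step continuations of the walk from (s, S);
   path_step performs a single averaging step. *)
Fixpoint path_avg (k : nat) (g : G -> {set 'I_n.+1} -> R) (s : G) (S : {set 'I_n.+1}) : R :=
  if k is k'.+1 then / INR n.+1 * rsum (fun j => path_avg k' g (s * tau j)%g (j |: S))
  else g s S.

Definition path_step (g : G -> {set 'I_n.+1} -> R) (s : G) (S : {set 'I_n.+1}) : R :=
  / INR n.+1 * rsum (fun j => g (s * tau j)%g (j |: S)).

Lemma path_avg_ext k (f g : G -> {set 'I_n.+1} -> R) :
  (forall s S, f s S = g s S) -> forall s S, path_avg k f s S = path_avg k g s S.
Proof.
move=> H; elim: k => [|k IH] s S //=; congr (_ * _); apply: rsum_ext => j; exact: IH.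
Qed.

Lemma path_avg_last k g s S : path_avg k.+1 g s S = path_avg k (path_step g) s S.
Proof.
elim: k s S => [|k IH] s S //=; congr (_ * _); apply: rsum_ext => j; exact: IH.
Qed.

Lemma expect_path_avg k (g : G -> R) : expect k g = path_avg k (fun s _ => g s) 1%g set0.
Proof.
elim: k g => [|k IH] g.
  rewrite /expect /= /delta1 -(rsum_pred1 (1%g : G) (g 1%g)); apply: rsum_ext => x.
  by case: eqP => [->|_]; lra.
rewrite path_avg_last /expect /= conv_q_expect -/(expect k _) IH.
exact: path_avg_ext.
Qed.

Lemma path_avg_mono k (Inv : G -> {set 'I_n.+1} -> Prop) (f g : G -> {set 'I_n.+1} -> R) :
  (forall s S j, Inv s S -> Inv (s * tau j)%g (j |: S)) ->
  (forall s S, Inv s S -> f s S <= g s S) ->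
  forall s S, Inv s S -> path_avg k f s S <= path_avg k g s S.
Proof.
move=> Hinv H; elim: k => [|k IH] s S hI /=; first exact: H.
apply: Rmult_le_compat_l; first by apply/Rlt_le/Rinv_0_lt_compat/INR_succ_pos.
by apply: rsum_le => j; apply: IH; exact: Hinv.
Qed.

Lemma path_avg_add k (f g : G -> {set 'I_n.+1} -> R) s S :
  path_avg k (fun s S => f s S + g s S) s S = path_avg k f s S + path_avg k g s S.
Proof.
elim: k s S => [|k IH] s S //=.
by rewrite (rsum_ext (fun j => IH _ _)) rsum_add Rmult_plus_distr_l.
Qed.

Lemma path_avg_scal k (a : R) (f : G -> {set 'I_n.+1} -> R) s S :
  path_avg k (fun s S => a * f s S) s S = a * path_avg k f s S.
Proof.
elim: k s S => [|k IH] s S //=.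
by rewrite (rsum_ext (fun j => IH _ _)) rsum_scal -Rmult_assoc (Rmult_comm _ a) Rmult_assoc.
Qed.

Lemma path_avg_const k (c : R) s S : path_avg k (fun _ _ => c) s S = c.
Proof.
elim: k s S => [|k IH] s S //=.
rewrite (rsum_ext (fun j => IH _ _)) rsum_const card_ord.
by have := INR_succ_pos n; move=> h; field; lra.
Qed.

Lemma convpow_nonneg k (x : G) : 0 <= convpow q k x.
Proof.
elim: k x => [|k IH] x /=; first by rewrite /delta1; case: ifP => _; lra.
by apply: rsum_nonneg => y; apply: Rmult_le_pos => //; exact: q_nonneg.
Qed.

Lemma convpow_sum k : rsum (convpow q k) = 1.
Proof.
have := expect_path_avg k (fun _ => 1); rewrite path_avg_const /expect => <-.
by apply: rsum_ext => x; ring.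
Qed.

Lemma convpow_le1 k (x : G) : convpow q k x <= 1.
Proof. by rewrite -(convpow_sum k); apply: rsum_ge_term => y; exact: convpow_nonneg. Qed.

Lemma expect_indic_le1 k (A : {set G}) : expect k (indic A) <= 1.
Proof.
rewrite -(convpow_sum k); apply: rsum_le => x; rewrite /indic.
case: (_ \in _); rewrite ?Rmult_1_r ?Rmult_0_r; [lra | exact: convpow_nonneg].
Qed.

Definition untouched_at (S : {set 'I_n.+1}) (i : 'I_n.+1) : R :=
  if (i != ord0) && (i \notin S) then 1 else 0.

Definition untouched (S : {set 'I_n.+1}) : R := rsum (untouched_at S).

Lemma untouched0 : untouched set0 = INR n.
Proof.
rewrite /untouched (rsum_ext (g := fun i => 1 - (if i == ord0 then 1 else 0))); last first.
  by move=> i; rewrite /untouched_at in_set0 andbT; case: eqP => _ /=; lra.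
by rewrite rsum_sub rsum_const rsum_pred1 card_ord S_INR; ring.
Qed.

Lemma untouched_setU1 (j : 'I_n.+1) S : untouched (j |: S) = untouched S - untouched_at S j.
Proof.
rewrite /untouched -(rsum_pred1 j (untouched_at S j)) -rsum_sub; apply: rsum_ext => i.
rewrite /untouched_at in_setU1; case: (eqVneq i j) => [->|hij] /=.
  by rewrite andbF; case: (_ && _); lra.
by rewrite Rminus_0_r.
Qed.

Lemma path_step_untouched (s : G) S :
  path_step (fun _ S => untouched S) s S = (1 - / INR n.+1) * untouched S.
Proof.
rewrite /path_step (rsum_ext (fun j => untouched_setU1 j S)) rsum_sub rsum_const card_ord -/(untouched S).
by have := INR_succ_pos n => h; field; lra.
Qed.

Lemma path_step_untouched_sq (s : G) S :
  path_step (fun _ S => untouched S * untouched S) s S =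
  (1 - 2 * / INR n.+1) * (untouched S * untouched S) + / INR n.+1 * untouched S.
Proof.
have untouched_at01 j : untouched_at S j * untouched_at S j = untouched_at S j.
  by rewrite /untouched_at; case: (_ && _); lra.
rewrite /path_step (rsum_ext (g := fun j => untouched S * untouched S +
  ((-2 * untouched S) * untouched_at S j + untouched_at S j))); last first.
  by move=> j; rewrite untouched_setU1; have := untouched_at01 j; lra.
rewrite !rsum_add rsum_const rsum_scal card_ord -/(untouched S).
by have := INR_succ_pos n => h; field; lra.
Qed.

Definition untouched_mean (k : nat) : R := (1 - / INR n.+1) ^ k * INR n.

Definition untouched_sq_mean (k : nat) : R :=
  (1 - 2 * / INR n.+1) ^ k * (INR n * INR n) +
  ((1 - / INR n.+1) ^ k - (1 - 2 * / INR n.+1) ^ k) * INR n.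

Lemma path_avg_untouched k (s : G) S :
  path_avg k (fun _ S => untouched S) s S = (1 - / INR n.+1) ^ k * untouched S.
Proof.
elim: k s S => [|k IH] s S; first by rewrite /=; ring.
rewrite path_avg_last (path_avg_ext _ (g := fun _ S => (1 - / INR n.+1) * untouched S));
  last exact: path_step_untouched.
by rewrite path_avg_scal IH /=; ring.
Qed.

Lemma path_avg_untouched_sq k (s : G) S :
  path_avg k (fun _ S => untouched S * untouched S) s S =
  (1 - 2 * / INR n.+1) ^ k * (untouched S * untouched S) +
  ((1 - / INR n.+1) ^ k - (1 - 2 * / INR n.+1) ^ k) * untouched S.
Proof.
elim: k s S => [|k IH] s S; first by rewrite /=; ring.
rewrite path_avg_last (path_avg_ext _ (g := fun _ S => (1 - 2 * / INR n.+1) *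
  (untouched S * untouched S) + / INR n.+1 * untouched S)); last exact: path_step_untouched_sq.
by rewrite path_avg_add !path_avg_scal IH path_avg_untouched /=; ring.
Qed.

Definition fixpts (s : G) : R := rsum (fun i => if (i != ord0) && (s i == i) then 1 else 0).

Definition many_fixed (m : R) : {set G} :=
  [set s | if Rle_dec m (fixpts s) then true else false].

Definition fixes_untouched (s : G) (S : {set 'I_n.+1}) : Prop :=
  forall i, i != ord0 -> i \notin S -> s i = i.

Lemma fixes_untouched_step (s : G) S j :
  fixes_untouched s S -> fixes_untouched (s * tau j)%g (j |: S).
Proof.
move=> H i hi; rewrite in_setU1 negb_or => /andP [hij hiS].
by rewrite permM H // /tau tpermD // eq_sym.
Qed.

Lemma untouched_le_fixpts (s : G) S : fixes_untouched s S -> untouched S <= fixpts s.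
Proof.
move=> H; apply: rsum_le => i; rewrite /untouched_at.
case: (boolP (i != ord0)) => hi /=; last lra.
case: (boolP (i \in S)) => hS /=; first by case: (_ == _); lra.
by rewrite H // eqxx; lra.
Qed.

Lemma chebyshev_pointwise (m mu : R) (s : G) S : 0 < m < mu -> fixes_untouched s S ->
  1 - / ((mu - m) * (mu - m)) * ((untouched S - mu) * (untouched S - mu))
  <= indic (many_fixed m) s.
Proof.
move=> [hm hmu] hI; have hN := untouched_le_fixpts hI.
set c := / ((mu - m) * (mu - m)); set d := untouched S - mu.
have hp : 0 < (mu - m) * (mu - m) by nra.
have hcd : 0 <= c * (d * d) by apply: Rmult_le_pos; [apply/Rlt_le/Rinv_0_lt_compat | exact: Rle_0_sqr].
rewrite /indic /many_fixed inE; case: Rle_dec => h /=; first lra.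
have hd : (mu - m) * (mu - m) <= d * d by rewrite /d; nra.
suff : 1 <= c * (d * d) by lra.
rewrite -(Rinv_l ((mu - m) * (mu - m))); last lra.
by apply: Rmult_le_compat_l => //; apply/Rlt_le/Rinv_0_lt_compat.
Qed.

Lemma expect_many_fixed_lower k (m mu : R) : 0 < m < mu ->
  1 - / ((mu - m) * (mu - m)) *
      (untouched_sq_mean k - 2 * mu * untouched_mean k + mu * mu)
  <= expect k (indic (many_fixed m)).
Proof.
move=> hm; rewrite expect_path_avg.
set c := / ((mu - m) * (mu - m)).
have hI0 : fixes_untouched 1%g set0 by move=> i _ _; rewrite perm1.
apply: Rle_trans (path_avg_mono k fixes_untouched_step
  (fun s S hI => chebyshev_pointwise hm hI) hI0).
rewrite (path_avg_ext _ (g := fun _ S => (1 - c * (mu * mu)) + ((2 * c * mu) * untouched S +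
  (- c) * (untouched S * untouched S)))); last by move=> s S; rewrite /c; ring.
rewrite path_avg_add path_avg_const path_avg_add !path_avg_scal path_avg_untouched path_avg_untouched_sq.
by rewrite untouched0 /untouched_mean /untouched_sq_mean; apply: Req_le; ring.
Qed.

(* h_t is the Poisson(t) mixture of the laws q^(k); the series converges since its terms
   are dominated by the Poisson weights. *)
Lemma heat_series t (x : G) : 0 <= t ->
  infinite_sum (fun k => pois t k * convpow q k x) (heat q t x).
Proof.
move=> ht; rewrite /heat; apply: epsilon_spec.
have bounded k : 0 <= pois t k * convpow q k x <= pois t k * 1 ^ k.
  have hp := pois_nonneg k ht; rewrite pow1; split.
    exact: Rmult_le_pos (convpow_nonneg k x).
  by rewrite Rmult_1_r -[X in _ <= X]Rmult_1_r; apply: Rmult_le_compat_l => //; exact: convpow_le1.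
have [l hl] := Rseries_CV_comp _ _ bounded (exist _ _ (pois_series t 1)).
by exists l.
Qed.

Lemma heat_msr_series t (A : {set G}) : 0 <= t ->
  infinite_sum (fun k => pois t k * expect k (indic A)) (msr (heat q t) A).
Proof.
move=> ht; apply: (series_ext (f := fun k => rsum (fun x =>
  if x \in A then pois t k * convpow q k x else 0))).
  by move=> k; rewrite /expect -rsum_scal; apply: rsum_ext => x; rewrite /indic; case: (_ \in _); ring.
apply: series_rsum => x; case: (x \in A); [exact: heat_series | exact: series_zero].
Qed.

Lemma heat_msr_le1 t (A : {set G}) : 0 <= t -> msr (heat q t) A <= 1.
Proof.
move=> ht; rewrite -(poisson_pgf1 t).
apply: (series_le _ (heat_msr_series A ht) (pois_series t 1)) => k.
by rewrite pow1; apply: Rmult_le_compat_l; [exact: pois_nonneg | exact: expect_indic_le1].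
Qed.

Definition mix_mean (t : R) : R := INR n * poisson_pgf t (1 - / INR n.+1).

Lemma mix_mean_series t :
  infinite_sum (fun k => pois t k * untouched_mean k) (mix_mean t).
Proof.
apply: (series_ext _ (series_scal (INR n) (pois_series t _))) => k.
by rewrite /untouched_mean; ring.
Qed.

Lemma mix_sq_mean_series t : let E := poisson_pgf t (1 - / INR n.+1) in
  infinite_sum (fun k => pois t k * untouched_sq_mean k)
    (mix_mean t * mix_mean t + INR n * (E - E * E)).
Proof.
move=> E; have EE : E * E = poisson_pgf t (1 - 2 * / INR n.+1).
  by rewrite /E poisson_pgfM; congr poisson_pgf; ring.
have -> : mix_mean t * mix_mean t + INR n * (E - E * E) =
          (INR n * INR n - INR n) * (E * E) + INR n * E by rewrite /mix_mean -/E; ring.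
rewrite EE; apply: (series_ext _ (series_add
  (series_scal _ (pois_series t (1 - 2 * / INR n.+1))) (series_scal _ (pois_series t _)))) => k.
by rewrite /untouched_sq_mean; ring.
Qed.

Lemma heat_many_fixed_lower t : 0 <= t -> 0 < mix_mean t ->
  1 - 4 / mix_mean t <= msr (heat q t) (many_fixed (mix_mean t / 2)).
Proof.
move=> ht; set mu := mix_mean t => hmu; set E := poisson_pgf t (1 - / INR n.+1).
set c := / ((mu - mu / 2) * (mu - mu / 2)).
have hm : 0 < mu / 2 < mu by lra.
have lower := series_add (series_scal (1 - c * (mu * mu)) (pois_series t 1))
  (series_add (series_scal (- c) (mix_sq_mean_series t)) (series_scal (2 * c * mu) (mix_mean_series t))).
have termwise k :
  (1 - c * (mu * mu)) * (pois t k * 1 ^ k) + (- c * (pois t k * untouched_sq_mean k) +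
    2 * c * mu * (pois t k * untouched_mean k)) <= pois t k * expect k (indic (many_fixed (mu / 2))).
  rewrite pow1; apply: Rle_trans (Rmult_le_compat_l _ _ _ (pois_nonneg k ht)
    (expect_many_fixed_lower k hm)); apply: Req_le; rewrite /c; ring.
apply: Rle_trans (series_le termwise lower (heat_msr_series _ ht)).
have hE : 0 < E := poisson_pgf_pos _ _.
have hn : 0 < INR n by move: hmu; rewrite /mu /mix_mean -/E; nra.
have hc0 : 0 < c by apply: Rinv_0_lt_compat; nra.
have hcE : 0 <= c * INR n * E * E.
  by apply: Rmult_le_pos; [apply: Rmult_le_pos; [apply: Rmult_le_pos|]|]; lra.
have hcnE : c * INR n * E = 4 / mu.
  by rewrite Rmult_assoc -[INR n * E]/mu /c; field; lra.
rewrite poisson_pgf1 -/E -/mu; nra.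
Qed.

(* Each position i is fixed by exactly a 1/(n+1) fraction of S_{n+1}: the right translates by
   tperm i j carry {x | x i = i} onto {x | x i = j}, and these n+1 sets partition S_{n+1}. *)
Lemma card_fixing (i : 'I_n.+1) :
  INR n.+1 * rsum (fun x : G => if x i == i then 1 else 0) = INR #|[set: G]|.
Proof.
have translate j : rsum (fun x : G => if x i == j then 1 else 0) =
                   rsum (fun x : G => if x i == i then 1 else 0).
  rewrite -(@rsum_reindex _ (fun x => x * tperm i j)%g); last first.
    by exists (fun x => x * tperm i j)%g => x; rewrite -mulgA tperm2 mulg1.
  apply: rsum_ext => x; rewrite permM.
  by rewrite -[X in _ == X](tpermL i j) (inj_eq (@perm_inj _ _)).
transitivity (rsum (fun j : 'I_n.+1 => rsum (fun x : G => if x i == j then 1 else 0))).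
  by rewrite (rsum_ext translate) rsum_const card_ord.
rewrite rsum_swap cardsT (rsum_ext (g := fun _ => 1)) ?rsum_const ?Rmult_1_r //.
move=> x; rewrite (rsum_ext (g := fun j => if j == x i then 1 else 0)) ?rsum_pred1 //.
by move=> j; rewrite eq_sym.
Qed.

Lemma unif_fixpts_mean : rsum (fun x : G => unif x * fixpts x) <= 1.
Proof.
have hG : 0 < INR #|[set: G]| := card_pos (1%g : G).
have hN := INR_succ_pos n.
rewrite /unif rsum_scal -(Rinv_l (INR #|[set: G]|)); last lra.
apply: Rmult_le_compat_l; first by apply/Rlt_le/Rinv_0_lt_compat.
apply: (Rle_trans _ (rsum (fun x : G => rsum (fun i => if x i == i then 1 else 0)))).
  by apply: rsum_le => x; apply: rsum_le => i; case: (_ != _); case: (_ == _) => /=; lra.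
rewrite rsum_swap (rsum_ext (g := fun _ => INR #|[set: G]| / INR n.+1)); last first.
  move=> i; rewrite -(card_fixing i) /Rdiv (Rmult_comm (INR n.+1)) Rmult_assoc Rinv_r;
  [by rewrite Rmult_1_r | lra].
by rewrite rsum_const card_ord; apply: Req_le; field; lra.
Qed.

Lemma unif_many_fixed (m : R) : 0 < m -> msr (@unif n.+1) (many_fixed m) <= / m.
Proof.
move=> hm; have hu (x : G) : 0 < unif x by apply/Rinv_0_lt_compat/(card_pos x).
have hm' : 0 < / m by apply: Rinv_0_lt_compat.
apply: (Rle_trans _ (rsum (fun x => / m * (unif x * fixpts x)))).
  apply: rsum_le => x; rewrite /many_fixed inE; case: Rle_dec => h.
    have := hu x; rewrite -[X in X <= _]Rmult_1_l -(Rinv_l m); last lra.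
    by move=> hx; rewrite Rmult_assoc; apply: Rmult_le_compat_l; nra.
  have hF : 0 <= fixpts x by apply: rsum_nonneg => i; case: (_ && _); lra.
  by apply: Rmult_le_pos; [lra | have := hu x; nra].
rewrite rsum_scal -[X in _ <= X]Rmult_1_r.
by apply: Rmult_le_compat_l; [lra | exact: unif_fixpts_mean].
Qed.

End Walk.

Section TestSet.
Variable T : finType.
Implicit Types (p u : T -> R) (A : {set T}).

Lemma foldr_Rmax_ge (I : eqType) (f : I -> R) d (s : seq I) x :
  x \in s -> f x <= foldr Rmax d (map f s).
Proof.
elim: s => [|a s IH] //=; rewrite in_cons => /orP [/eqP ->|hx]; first exact: Rmax_l.
by apply: Rle_trans (IH hx) _; exact: Rmax_r.
Qed.

Lemma foldr_Rmax_le (I : Type) (f : I -> R) d (s : seq I) b :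
  d <= b -> (forall x, f x <= b) -> foldr Rmax d (map f s) <= b.
Proof. by move=> hd hf; elim: s => [|a s IH] //=; exact: Rmax_lub. Qed.

Lemma tv_ge p u A : msr p A - msr u A <= tv p u.
Proof.
by apply: (@foldr_Rmax_ge _ (fun A : {set T} => msr p A - msr u A)); rewrite mem_enum inE.
Qed.

Lemma tv_le1 p u : (forall B, msr p B <= 1) -> (forall B, 0 <= msr u B) -> tv p u <= 1.
Proof.
move=> hp hu; apply: foldr_Rmax_le => [|B]; first by have := hp set0; have := hu set0; lra.
by have := hp B; have := hu B; lra.
Qed.

(* For the uniform law u and any v >= u(A): (p(A) - u(A))^2 / v <= d_2(p,u)^2.
   This is Cauchy-Schwarz, obtained by expanding 0 <= sum_{x in A} (p x - u x - c)^2
   with the optimal constant c = (p(A) - u(A)) / (|T| v). *)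
Lemma dist2_sq_ge p u A (v : R) (x0 : T) :
  (forall x, u x = / INR #|[set: T]|) -> 0 < v -> msr u A <= v ->
  (msr p A - msr u A) * (msr p A - msr u A) / v <=
  INR #|[set: T]| * rsum (fun x => Rsqr (Rabs (p x - u x))).
Proof.
move=> hu hv hA; have hG : 0 < INR #|[set: T]| := card_pos x0.
move: hu hG; set N := INR #|[set: T]|; clearbody N => hu hG.
set c := (msr p A - msr u A) / (N * v).
have expand : rsum (fun x => 2 * c * (if x \in A then p x else 0) -
    2 * c * (if x \in A then u x else 0) - c * c * N * (if x \in A then u x else 0))
  <= rsum (fun x => Rsqr (Rabs (p x - u x))).
  apply: rsum_le => x; rewrite -Rsqr_abs /Rsqr.
  case: (x \in A) => /=; last by rewrite !Rmult_0_r !Rminus_0_r; exact: Rle_0_sqr.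
  have -> : c * c * N * u x = c * c by rewrite hu; field; lra.
  by have := Rle_0_sqr (p x - u x - c); rewrite /Rsqr; nra.
rewrite !rsum_sub !rsum_scal -/(msr p A) -/(msr u A) in expand.
apply: Rle_trans (Rmult_le_compat_l _ _ _ (Rlt_le _ _ hG) expand).
move: hA; rewrite /c; set P := msr p A; set U := msr u A => hA.
have hcc : 0 <= (P - U) / (N * v) * ((P - U) / (N * v)) * N.
  by apply: Rmult_le_pos; [exact: Rle_0_sqr | lra].
apply: (Rle_trans _ (N * (2 * ((P - U) / (N * v)) * (P - U) -
   (P - U) / (N * v) * ((P - U) / (N * v)) * N * v))).
  by apply: Req_le; field; lra.
by apply: Rmult_le_compat_l; [lra | nra].
Qed.

End TestSet.

Lemma cutoff_bounds n t : 0 <= t -> 12 <= mix_mean n t ->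
  (1 - 6 / mix_mean n t <= tv (heat (@q_ttr n.+1) t) (@unif n.+1) <= 1) /\
  sqrt (mix_mean n t / 8) <= dist2 (heat (@q_ttr n.+1) t) (@unif n.+1).
Proof.
move=> ht hmu; have hL := heat_many_fixed_lower ht (ltac:(lra) : 0 < mix_mean n t).
have hU := unif_many_fixed n (ltac:(lra) : 0 < mix_mean n t / 2).
move: hL hU hmu; set mu := mix_mean n t; set A := many_fixed n (mu / 2) => hL hU hmu.
set h := heat (@q_ttr n.+1) t; set D := msr h A - msr (@unif n.+1) A.
have hU' : msr (@unif n.+1) A <= 2 / mu by apply: Rle_trans hU _; apply: Req_le; field; lra.
have hD : 1 - 6 / mu <= D.
  have split6 : 6 / mu = 4 / mu + 2 / mu by field; lra.
  by rewrite /D /h; lra.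
split; first split.
- exact: Rle_trans hD (tv_ge _ _ A).
- apply: tv_le1 => B; first exact: heat_msr_le1.
  apply: rsum_nonneg => x; case: (_ \in _); last lra.
  by apply/Rlt_le/Rinv_0_lt_compat/(card_pos x).
- have hv : 0 < 2 / mu by apply: Rdiv_lt_0_compat; lra.
  apply: sqrt_le_1_alt; apply: Rle_trans (dist2_sq_ge h (1%g : Sn n.+1) (fun x => erefl) hv hU').
  have hD2 : 1 / 2 <= D.
    suff : 6 / mu <= 1 / 2 by lra.
    by apply: (Rmult_le_reg_r mu); [lra | rewrite /Rdiv Rmult_assoc Rinv_l; lra].
  have -> : D * D / (2 / mu) = D * D * mu / 2 by field; lra.
  clearbody D; have : 1 / 4 <= D * D by nra.
  nra.
Qed.

(* Along t = k_{n+1}, mu = n e^{-t/(n+1)} = n/(n+1) e^{L_{n+1}} with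
   L_N = -(k_N - N log N)/N, so mu >= (1 + L_{n+1})/2 tends to infinity. *)
Lemma mix_mean_diverges (k : nat -> R) :
  cv_infty (fun n => - ((k n - INR n * ln (INR n)) / INR n)) ->
  forall B, exists N0, le 1 N0 /\ forall n, le N0 n.+1 -> B < mix_mean n (k n.+1).
Proof.
move=> hcv B; have [N HN] := hcv (2 * B).
exists (Nat.max N 2); split => [|n hn]; first lia.
have := HN n.+1 ltac:(lia); set L := - _ => hL.
have hn1 : 1 <= INR n by rewrite -INR_1; apply: le_INR; lia.
have eN : INR n.+1 = INR n + 1 := S_INR n.
have pgfE : poisson_pgf (k n.+1) (1 - / INR n.+1) = exp L / INR n.+1.
  have -> : poisson_pgf (k n.+1) (1 - / INR n.+1) = exp (L + - ln (INR n.+1)).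
    by rewrite /poisson_pgf -exp_plus /L; congr exp; field; lra.
  by rewrite exp_plus exp_Ropp exp_ln; [field|]; lra.
have hE := exp_ineq1_le L; have hE0 := exp_pos L.
rewrite /mix_mean pgfE eN; move: hE hE0; set E := exp L => hE hE0.
have : 0 <= E * (INR n - 1) / (2 * (INR n + 1)).
  by apply: Rmult_le_pos; [nra | apply/Rlt_le/Rinv_0_lt_compat; lra].
have -> : E * (INR n - 1) / (2 * (INR n + 1)) = INR n * (E / (INR n + 1)) - E / 2.
  by field; lra.
lra.
Qed.

Lemma heat_dist2_diverges (k : nat -> R) : (forall n, 0 <= k n) ->
  cv_infty (fun n => - ((k n - INR n * ln (INR n)) / INR n)) ->
  cv_infty (fun n => dist2 (heat (@q_ttr n) (k n)) (@unif n)).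
Proof.
move=> hk hcv M; have [N [hN1 HN]] := mix_mean_diverges hcv (Rmax 12 (8 * (M * M + 1))).
exists N => [[|n] hn]; first lia.
have hmu := HN n hn; have hm1 := Rmax_l 12 (8 * (M * M + 1)).
have hm2 := Rmax_r 12 (8 * (M * M + 1)).
have [_ hd] := cutoff_bounds (hk n.+1) (ltac:(lra) : 12 <= mix_mean n (k n.+1)).
apply: Rlt_le_trans hd; apply: Rle_lt_trans (Rle_abs M) _.
rewrite -sqrt_Rsqr_abs; apply: sqrt_lt_1_alt; split; first exact: Rle_0_sqr.
by rewrite /Rsqr; lra.
Qed.

Lemma heat_tv_to_one (k : nat -> R) : (forall n, 0 <= k n) ->
  cv_infty (fun n => - ((k n - INR n * ln (INR n)) / INR n)) ->
  Un_cv (fun n => tv (heat (@q_ttr n) (k n)) (@unif n)) 1.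
Proof.
move=> hk hcv eps he; have [N [hN1 HN]] := mix_mean_diverges hcv (Rmax 12 (6 / eps)).
exists N => [[|n] hn]; first lia.
have hmu := HN n hn; have hm1 := Rmax_l 12 (6 / eps); have hm2 := Rmax_r 12 (6 / eps).
have [[hlow hup] _] := cutoff_bounds (hk n.+1) (ltac:(lra) : 12 <= mix_mean n (k n.+1)).
move: hlow hup hmu; set mu := mix_mean n (k n.+1) => hlow hup hmu.
have small : 6 / mu < eps.
  apply: (Rmult_lt_reg_r mu); first lra.
  have -> : 6 / mu * mu = 6 by field; lra.
  have : 6 / eps * eps = 6 by field; lra.
  nra.
by rewrite /R_dist; apply: Rabs_def1; lra.
Qed.

Unset Implicit Arguments.

Theorem corollary3p3 (k : nat -> R) :
  (forall n, 0 <= k n) ->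
  cv_infty (fun n => - ((k n - INR n * ln (INR n)) / INR n)) ->
  cv_infty (fun n => dist2 (heat (@q_ttr n) (k n)) (@unif n)) /\
  Un_cv (fun n => tv (heat (@q_ttr n) (k n)) (@unif n)) 1.
Proof.
move=> hk hcv; split; [exact: heat_dist2_diverges | exact: heat_tv_to_one].
Qed.
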